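(* Fix an integer $n\ge 2$, a real number $0<p<1$, and $\xi>0$ as described in the context. Let $f(\mathbf{x})=x_1^p+\cdots+x_n^p$. Suppose $\mathbf{e}=(e_1,\ldots,e_n)\in\mathbb{R}^n$ satisfies $e_1+\cdots+e_n=n(n-1)$, $e_1^2+\cdots+e_n^2\le (n-1)^4+(n-1)$, $\prod_{i=1}^n e_i\ge (n-1)^2$, $e_i\le (n-1)^2$ for $i=1,\ldots,n$, $e_i\ge \xi$ for $i=1,\ldots,n$. Then $f(\mathbf{e})\ge (n-1)^{2p}+n-1$.
   Context: $\xi>0$ is a fixed number chosen such that whenever a point $\mathbf{x}$ with $x_j\le (n-1)^2$ for all $j$ has $x_i=\xi$ for some $i$, then $\prod_{j=1}^n x_j<(n-1)^2$. *)

From mathcomp Require Import all_boot all_order all_algebra.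
From mathcomp Require Import all_classical all_reals all_analysis.
Set Implicit Arguments. Unset Strict Implicit. Unset Printing Implicit Defensive.
Import Order.TTheory GRing.Theory Num.Theory.
Local Open Scope ring_scope.

Definition fpow (R : realType) (n : nat) (p : R) (x : 'I_n -> R) : R :=
  \sum_(i < n) powR (x i) p.

(* The defining property of xi from the context: whenever a point x of the
   positive orthant with x_j <= (n-1)^2 for all j has x_i = xi for some i,
   then prod_j x_j < (n-1)^2. *)
Definition xi_property (R : realType) (n : nat) (xi : R) : Prop :=
  forall (x : 'I_n -> R) (i : 'I_n),
    (forall j, 0 < x j) ->
    (forall j, x j <= (n.-1)%:R ^+ 2) ->
    x i = xi ->
    \prod_(j < n) x j < (n.-1)%:R ^+ 2.

From mathcomp Require Import all_boot all_order all_algebra.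
From mathcomp Require Import all_classical all_reals all_analysis.
From mathcomp Require Import ring lra zify.
Import Order.TTheory GRing.Theory Num.Theory.
Local Open Scope ring_scope.

(* Write u_i = ln e_i and L = ln M, where M = (n-1)^2, and measure each term by
   its Taylor defect  d_q(u) = e^{qu} - 1 - qu.  The ratio d_p(u) / d_1(u) is at
   least d_p(L) / d_1(L) for every u <= L (the derivative of
   d_1(L) d_p - d_p(L) d_1 changes sign at most once, because the chord slopes
   (t^p - 1)/(t - 1) of the concave power t^p decrease).  Summing over i,
   sum_i d_1(u_i) = M - 1 - sum_i u_i is controlled by the constraint on the sum,
   and sum_i u_i >= L by the constraint on the product; this yields
   sum_i e_i^p >= M^p + n - 1. *)

Section ExpInequalities.
Context {R : realType}.

Lemma expR_ge_tangent (x y : R) : expR x * (1 + y - x) <= expR y.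
Proof.
have h := expR_ge1Dx (y - x).
have -> : expR y = expR (y - x) * expR x by rewrite -expRD subrK.
have := expR_gt0 x; nra.
Qed.

Lemma expR_scale_le (p w : R) : 0 <= p <= 1 ->
  expR (p * w) <= p * expR w + (1 - p).
Proof.
case/andP=> p0 p1.
have tw := ler_wpM2l p0 (expR_ge_tangent (p * w) w).
have t0 : 0 <= 1 - p by rewrite subr_ge0.
have {}t0 := ler_wpM2l t0 (expR_ge_tangent (p * w) 0).
rewrite expR0 in t0.
set a := expR (p * w) in tw t0 *.
have : a = p * (a * (1 + w - p * w)) + (1 - p) * (a * (1 + 0 - p * w)) by ring.
lra.
Qed.

(* The tangent line of the concave map t |-> t^p at t = e^s, evaluated at e^y. *)
Lemma expR_scale_tangent (p s y : R) : 0 <= p <= 1 ->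
  expR s * expR (p * y) <= expR (p * s) * (expR s + p * (expR y - expR s)).
Proof.
move=> p01; have h := expR_scale_le p (y - s) p01.
have -> : expR (p * y) = expR (p * s) * expR (p * (y - s)).
  by rewrite -expRD; congr expR; ring.
have -> : expR y = expR s * expR (y - s) by rewrite -expRD; congr expR; ring.
have q : 0 <= expR s * expR (p * s) by rewrite mulr_ge0 ?expR_ge0.
have := ler_wpM2l q h.
set a := expR (p * (y - s)); set b := expR (y - s).
have -> : expR s * expR (p * s) * (p * b + (1 - p))
  = expR (p * s) * (expR s + p * (expR s * b - expR s)) by ring.
by rewrite mulrA.
Qed.

Lemma expR_scale_chord (p s u : R) : 0 <= p <= 1 -> 0 <= s <= u ->
  (expR (p * u) - 1) * (expR s - 1) <= (expR (p * s) - 1) * (expR u - 1).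
Proof.
move=> p01 /andP[s0 su].
have t0 := expR_scale_tangent p s 0 p01; rewrite mulr0 expR0 in t0.
have tu := expR_scale_tangent p s u p01.
have S1 : 1 <= expR s by rewrite -expR0 ler_expR.
have SU : expR s <= expR u by rewrite ler_expR.
have Sp := expR_gt0 s.
have key : expR s * ((expR u - expR s) + (expR s - 1) * expR (p * u))
   <= expR s * ((expR u - 1) * expR (p * s)) by nra.
rewrite ler_pM2l // in key; nra.
Qed.

Lemma is_derive_ge0_le {f df : R -> R} {a b : R} :
  (forall x : R, is_derive x (1 : R) f (df x)) ->
  (forall x, a < x < b -> 0 <= df x) -> a <= b -> f a <= f b.
Proof.
move=> fdf df_ge0 ab.
have fd x : derivable f x 1 by case: (fdf x).
apply: (@ger0_derive1_ndecr R f a b) => //.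
- by move=> x; rewrite in_itv /= => /df_ge0; rewrite derive1E derive_val.
- by apply: derivable_within_continuous => x _; apply: fd.
Qed.

Lemma is_derive_le0_ge {f df : R -> R} {a b : R} :
  (forall x : R, is_derive x (1 : R) f (df x)) ->
  (forall x, a < x < b -> df x <= 0) -> a <= b -> f b <= f a.
Proof.
move=> fdf df_le0 ab; rewrite -lerN2.
apply: (@is_derive_ge0_le (- f) (- df) a b) => // x.
by move/df_le0; rewrite oppr_ge0.
Qed.

Definition expR_defect (q u : R) := expR (q * u) - 1 - q * u.

Lemma expR_defect0 (q : R) : expR_defect q 0 = 0.
Proof. by rewrite /expR_defect mulr0 expR0; ring. Qed.

Lemma is_derive_expR_defect (q x : R) :
  is_derive x 1 (expR_defect q) (q * expR (q * x) - q).
Proof.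
have lin (u : R) : is_derive u (1 : R) (fun v : R => q * v) q.
  apply: (is_derive_eq (is_deriveZ q (is_derive_id u 1))).
  by rewrite /GRing.scale /= mulr1.
have dexp : is_derive x 1 (expR \o (fun u : R => q * u)) (expR (q * x) * q).
  exact: is_derive1_comp (is_derive_expR (q * x)) (lin x).
have := is_deriveB (is_deriveB dexp (is_derive_cst (1 : R) x (1 : R))) (lin x).
by move/is_derive_eq; apply; ring.
Qed.

Lemma is_derive_expR_defect_comb (a b p x : R) :
  is_derive x 1 (fun u => a * expR_defect p u - b * expR_defect 1 u)
    (a * (p * expR (p * x) - p) - b * (expR x - 1)).
Proof.
apply: (is_derive_eq (is_deriveB (is_deriveZ a (is_derive_expR_defect p x))
  (is_deriveZ b (is_derive_expR_defect 1 x)))).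
by rewrite /GRing.scale /= !mul1r; ring.
Qed.

Lemma expR_defect_le (p L : R) : 0 <= p <= 1 -> 0 <= L ->
  expR_defect p L <= p ^+ 2 * expR_defect 1 L.
Proof.
move=> p01 L0.
have := is_derive_ge0_le (is_derive_expR_defect_comb (-1) (- p ^+ 2) p) _ L0.
rewrite !expR_defect0 => mono.
suff : -1 * 0 - - p ^+ 2 * 0 <= -1 * expR_defect p L - - p ^+ 2 * expR_defect 1 L.
  by lra.
apply: mono => x _; have := expR_scale_le p x p01; case/andP: p01 => p0 _; nra.
Qed.

Section DefectRatio.
Variables p L : R.
Hypotheses (p01 : 0 <= p <= 1) (L_gt0 : 0 < L).

Let D := expR_defect 1 L.
Let N := expR_defect p L.
Let G u := D * expR_defect p u - N * expR_defect 1 u.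
Let G' x := D * (p * expR (p * x) - p) - N * (expR x - 1).

Let D_gt0 : 0 < D.
Proof. by rewrite /D /expR_defect !mul1r; have := expR_gt1Dx (lt0r_neq0 L_gt0); lra. Qed.

Let NpD : N <= p ^+ 2 * D.
Proof. exact: expR_defect_le p01 (ltW L_gt0). Qed.

Let is_derive_G (x : R) : is_derive x (1 : R) G (G' x).
Proof. exact: is_derive_expR_defect_comb. Qed.

Let G'_le0 x : x <= 0 -> G' x <= 0.
Proof.
move=> x0; case/andP: (p01) => p0 _.
have ex1 : expR x <= 1 by rewrite -expR0 ler_expR.
have c := ler_wpM2l (mulr_ge0 (ltW D_gt0) p0) (expR_scale_le p x p01).
have m : 0 <= (p ^+ 2 * D - N) * (1 - expR x) by rewrite mulr_ge0 // subr_ge0.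
rewrite /G'; nra.
Qed.

(* On [0, +oo) the sign of G' x is that of  D p (e^{px}-1)/(e^x-1) - N,  a
   nonincreasing function of x by expR_scale_chord. *)
Let G'_ge0_left s t : 0 <= s <= t -> 0 < t -> 0 <= G' t -> 0 <= G' s.
Proof.
move=> st t0 Gt; have c := expR_scale_chord p s t p01 st.
case/andP: st => s0 _.
have es : 0 <= expR s - 1 by rewrite subr_ge0 -expR0 ler_expR.
have et : 0 < expR t - 1 by rewrite subr_gt0 expR_gt1.
have Dp : 0 <= D * p by case/andP: p01 => p0 _; rewrite mulr_ge0 // ltW.
have : G' t * (expR s - 1) <= G' s * (expR t - 1).
  have -> : G' s * (expR t - 1) = G' t * (expR s - 1) + D * p *
      ((expR (p * s) - 1) * (expR t - 1) - (expR (p * t) - 1) * (expR s - 1)).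
    by rewrite /G'; ring.
  by rewrite lerDl mulr_ge0 // subr_ge0.
by rewrite -(pmulr_lge0 _ et); apply: le_trans; rewrite mulr_ge0.
Qed.

Lemma expR_defect_ratio_le u : u <= L ->
  expR_defect p L * expR_defect 1 u <= expR_defect 1 L * expR_defect p u.
Proof.
move=> uL; rewrite -subr_ge0 -/D -/N -/(G u).
have G0 : G 0 = 0 by rewrite /G !expR_defect0; ring.
have GL : G L = 0 by rewrite /G /D /N; ring.
have [u0|u_gt0] := lerP u 0.
  rewrite -G0; apply: is_derive_le0_ge is_derive_G _ u0.
  by move=> x /andP[_ /ltW]; apply: G'_le0.
have [Gu|Gu] := lerP 0 (G' u).
  rewrite -G0; apply: is_derive_ge0_le is_derive_G _ (ltW u_gt0).
  move=> x /andP[x0 xu]; apply: (G'_ge0_left x u _ u_gt0 Gu).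
  by rewrite !ltW.
rewrite -GL; apply: is_derive_le0_ge is_derive_G _ uL.
move=> x /andP[ux _]; rewrite leNgt; apply/negP => /ltW Gx.
have uxp : 0 <= u <= x by rewrite !ltW.
by have := G'_ge0_left u x uxp (lt_trans u_gt0 ux) Gx; rewrite leNgt Gu.
Qed.

End DefectRatio.

End ExpInequalities.

Section PowerSums.
Context {R : realType}.

Lemma sum_eq_upper_bound {k : nat} {c : R} {e : 'I_k -> R} :
  (forall i, e i <= c) -> \sum_(i < k) e i = k%:R * c -> forall i, e i = c.
Proof.
move=> ec sum_e i.
have gap_ge0 j : 0 <= c - e j by rewrite subr_ge0.
have gap0 : \sum_(j < k) (c - e j) = 0.
  by rewrite sumrB sum_e sumr_const card_ord mulr_natl subrr.
by apply/eqP; rewrite eq_sym -subr_eq0 (psumr_eq0P (fun j _ => gap_ge0 j) gap0).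
Qed.

Lemma powR_sum_ge_gt1 (k : nat) (p M : R) (e : 'I_k -> R) :
  0 <= p <= 1 -> 1 < M ->
  (forall i, 0 < e i) -> (forall i, e i <= M) -> M <= \prod_(i < k) e i ->
  \sum_(i < k) e i = k%:R - 1 + M ->
  M `^ p + (k%:R - 1) <= \sum_(i < k) e i `^ p.
Proof.
move=> p01 M_gt1 e_gt0 e_le prod_e sum_e.
have M_gt0 : 0 < M by apply: lt_trans M_gt1.
set L := ln M; pose u i := ln (e i).
have L_gt0 : 0 < L by rewrite ln_gt0.
have expL : expR L = M by rewrite lnK // posrE.
have expu i : expR (u i) = e i by rewrite lnK // posrE.
have uL i : u i <= L by rewrite ler_ln ?posrE.
have LU : L <= \sum_i u i.
  rewrite -ler_expR expL expR_sum.
  by under eq_bigr do rewrite expu.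
have powE i : e i `^ p = expR (p * u i) by rewrite /powR gt_eqF.
have sum1 : \sum_i expR_defect 1 (u i) = M - 1 - \sum_i u i.
  under eq_bigr do rewrite /expR_defect !mul1r expu.
  by rewrite !sumrB sum_e sumr_const card_ord; ring.
have sump : \sum_i expR_defect p (u i)
    = \sum_i e i `^ p - k%:R - p * \sum_i u i.
  under eq_bigr do rewrite /expR_defect -powE.
  by rewrite !sumrB sumr_const card_ord mulr_sumr.
have key : expR_defect p L * \sum_i expR_defect 1 (u i)
    <= expR_defect 1 L * \sum_i expR_defect p (u i).
  by rewrite !mulr_sumr; apply: ler_sum => i _; exact: expR_defect_ratio_le.
have NpD := expR_defect_le p L p01 (ltW L_gt0).
rewrite sum1 sump {sum1 sump} in key.
rewrite /expR_defect !mul1r expL in key NpD.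
have -> : M `^ p = expR (p * L) by rewrite /powR gt_eqF.
set P := \sum_i e i `^ p in key *; set U := \sum_i u i in key LU *.
set Y := expR (p * L) in key NpD *; set D := M - 1 - L in key NpD.
have D_gt0 : 0 < D by rewrite /D -{1}expL; have := expR_gt1Dx (lt0r_neq0 L_gt0); lra.
have slack : 0 <= (p * D - (Y - 1 - p * L)) * (U - L).
  rewrite mulr_ge0 ?subr_ge0 //; apply: (le_trans NpD).
  apply: ler_wpM2r; first exact: ltW.
  by case/andP: p01 => p0 p1; nra.
have : 0 <= D * (P - (Y + (k%:R - 1))).
  have -> : D * (P - (Y + (k%:R - 1))) = D * (P - k%:R - p * U)
      - (Y - 1 - p * L) * (M - 1 - U) + (p * D - (Y - 1 - p * L)) * (U - L).
    by rewrite /D; ring.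
  by rewrite addr_ge0 // subr_ge0.
by rewrite pmulr_rge0 // subr_ge0.
Qed.

Lemma powR_sum_ge (k : nat) (p M : R) (e : 'I_k -> R) :
  0 <= p <= 1 -> 1 <= M ->
  (forall i, 0 < e i) -> (forall i, e i <= M) -> M <= \prod_(i < k) e i ->
  \sum_(i < k) e i = k%:R - 1 + M ->
  M `^ p + (k%:R - 1) <= \sum_(i < k) e i `^ p.
Proof.
move=> p01; rewrite le_eqVlt => /predU1P[<-|]; last exact: powR_sum_ge_gt1.
move=> _ e_le _ sum_e; rewrite subrK -[k%:R]mulr1 in sum_e.
have e1 := sum_eq_upper_bound e_le sum_e.
under eq_bigr do rewrite e1.
by rewrite !powR1 sumr_const card_ord addrC subrK.
Qed.

End PowerSums.

Theorem theorem3p4 (R : realType) (n : nat) (p xi : R) (e : 'I_n -> R) :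
  (2 <= n)%N ->
  0 < p -> p < 1 ->
  0 < xi -> @xi_property R n xi ->
  \sum_(i < n) e i = (n * n.-1)%:R ->
  \sum_(i < n) e i ^+ 2 <= (n.-1)%:R ^+ 4 + (n.-1)%:R ->
  (n.-1)%:R ^+ 2 <= \prod_(i < n) e i ->
  (forall i, e i <= (n.-1)%:R ^+ 2) ->
  (forall i, xi <= e i) ->
  powR ((n.-1)%:R) (2 * p) + (n.-1)%:R <= @fpow R n p e.
Proof.
move=> n_ge2 p_gt0 p_lt1 xi_gt0 _ sum_e _ prod_e e_le e_ge.
set m : R := (n.-1)%:R in sum_e prod_e e_le *.
have nE : n%:R = m + 1 by rewrite /m natr1 prednK // (leq_trans _ n_ge2).
have m_ge1 : 1 <= m by rewrite /m ler1n; lia.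
have -> : powR m (2 * p) = powR (m ^+ 2) p.
  by rewrite powRrM powR_mulrn // (le_trans ler01 m_ge1).
have := @powR_sum_ge R n p (m ^+ 2) e; rewrite nE addrK; apply => //.
- by rewrite !ltW.
- exact: exprn_ege1.
- by move=> i; apply: lt_le_trans (e_ge i).
- by rewrite sum_e natrM -/m nE; ring.
Qed.
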